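(* Let $p$ be an odd prime and $q=2(p-1)$. Let $t\geq 0$ be an integer written as $t=q(c_np^n+\cdots+c_1p+c_0)+c_{-1}$ with $0\leq c_i<p$ for $0\leq i\leq n$ and $0\leq c_{-1}<q$. Let $s_1$ be an integer with $0<s_1<q$. If $c_{-1}>s_1$, then in the May spectral sequence $E_1^{s_1,t,*}=0$.
   Context: The May spectral sequence $\{E_r^{s,t,u},d_r\}$ (for the mod $p$ Steenrod algebra) has $E_1^{*,*,*}=E(h_{i,j}\mid i>0,j\geq 0)\otimes P(b_{i,j}\mid i>0,j\geq 0)\otimes P(a_k\mid k\geq 0)$ ($E$ exterior, $P$ polynomial), with $h_{i,j}\in E_1^{1,2(p^i-1)p^j,2i-1}$, $b_{i,j}\in E_1^{2,2(p^i-1)p^{j+1},p(2i-1)}$, $a_k\in E_1^{1,2p^k-1,2k+1}$. $E_1^{s,t,*}$ denotes the direct sum over all values of the third index. *)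

From mathcomp Require Import all_boot.
Set Implicit Arguments. Unset Strict Implicit. Unset Printing Implicit Defensive.

(* The E_1-term of the May spectral sequence is
     E(h_{i,j}) (x) P(b_{i,j}) (x) P(a_k)   over F_p,
   a free graded-commutative algebra; as an F_p-vector space it has the basis
   of (canonically ordered) monomials.  E_1^{s,t,*} is the F_p-span of the
   basis monomials of internal bidegree (s,t) (third degree summed over).
   A monomial is recorded by
     - hs : the list of pairs (i,j) with h_{i,j} occurring (exterior: each at
            most once; strictly increasing in lexicographic order),
     - bs : the list of pairs (i,j) of b_{i,j} factors with multiplicity
            (weakly increasing lexicographically),
     - as_: the list of k of a_k factors with multiplicity (weakly increasing),
   with i > 0 for all h_{i,j}, b_{i,j}. *)

Definition lexle (x y : nat * nat) : bool :=
  (x.1 < y.1) || ((x.1 == y.1) && (x.2 <= y.2)).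
Definition lexlt (x y : nat * nat) : bool :=
  (x.1 < y.1) || ((x.1 == y.1) && (x.2 < y.2)).

Record monomial := Monomial {
  hs : seq (nat * nat);
  bs : seq (nat * nat);
  as_ : seq nat }.

Definition canonical_monomial (m : monomial) : bool :=
  [&& all (fun ij => 0 < ij.1) (hs m), all (fun ij => 0 < ij.1) (bs m),
      sorted lexlt (hs m), sorted lexle (bs m) & sorted leq (as_ m)].

Definition sdeg (m : monomial) : nat :=
  size (hs m) + 2 * size (bs m) + size (as_ m).

Definition deg_h (p : nat) (ij : nat * nat) : nat := 2 * (p ^ ij.1 - 1) * p ^ ij.2.
Definition deg_b (p : nat) (ij : nat * nat) : nat := 2 * (p ^ ij.1 - 1) * p ^ ij.2.+1.
Definition deg_a (p : nat) (k : nat) : nat := 2 * p ^ k - 1.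

Definition tdeg (p : nat) (m : monomial) : nat :=
  \sum_(x <- hs m) deg_h p x + \sum_(x <- bs m) deg_b p x + \sum_(k <- as_ m) deg_a p k.

Definition E1_basis (p s t : nat) : Type :=
  { m : monomial | [&& canonical_monomial m, sdeg m == s & tdeg p m == t] }.

Definition E1_vanishes (p s t : nat) : Prop := E1_basis p s t -> False.

(** Every generator [h_{i,j}], [b_{i,j}] has internal degree divisible by
    [q = 2(p-1)], while [a_k] has degree [2p^k - 1 = 1 (mod q)].  Hence a
    monomial of bidegree [(s,t)] with [r] factors [a_k] has [t = r (mod q)]
    and [r <= s].  For [s < q] this forces [t mod q <= s], so the residue
    [c_{-1} > s_1] is not attained. *)
From mathcomp Require Import all_boot zify.

Lemma subn1_dvdn_expn_subn1 (p i : nat) : p - 1 %| p ^ i - 1.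
Proof. by rewrite !subn1 dvdn_pred_predX. Qed.

Lemma dvdn_deg_h (p : nat) (x : nat * nat) : 2 * (p - 1) %| deg_h p x.
Proof. by apply: dvdn_mulr; rewrite dvdn_pmul2l // subn1_dvdn_expn_subn1. Qed.

Lemma dvdn_deg_b (p : nat) (x : nat * nat) : 2 * (p - 1) %| deg_b p x.
Proof. by apply: dvdn_mulr; rewrite dvdn_pmul2l // subn1_dvdn_expn_subn1. Qed.

Lemma deg_a_mod (p k : nat) : 0 < p -> deg_a p k = 1 %[mod 2 * (p - 1)].
Proof.
move=> p_gt0; have pk_gt0 : 0 < p ^ k by rewrite expn_gt0 p_gt0.
have [y Ey] := dvdnP (subn1_dvdn_expn_subn1 p k).
have -> : deg_a p k = y * (2 * (p - 1)) + 1.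
  by rewrite /deg_a mulnCA -Ey; lia.
by rewrite modnMDl.
Qed.

Lemma tdeg_mod (p : nat) (m : monomial) :
  0 < p -> tdeg p m = size (as_ m) %[mod 2 * (p - 1)].
Proof.
move=> p_gt0; set q := 2 * (p - 1).
have sum_h0 : q %| \sum_(x <- hs m) deg_h p x.
  by apply: dvdn_sum => x _; apply: dvdn_deg_h.
have sum_b0 : q %| \sum_(x <- bs m) deg_b p x.
  by apply: dvdn_sum => x _; apply: dvdn_deg_b.
have sum_a : \sum_(k <- as_ m) deg_a p k = size (as_ m) %[mod q].
  rewrite -sum1_size -[LHS]modn_summ -[RHS]modn_summ.
  by congr (_ %% _); apply: eq_bigr => k _; apply: deg_a_mod.
rewrite /tdeg -modnDm -(modnDm (\sum_(x <- hs m) _)) (eqP sum_h0) (eqP sum_b0).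
by rewrite modnDm sum_a.
Qed.

Lemma E1_vanishes_of_lt_residue (p s t : nat) :
  0 < p -> s < 2 * (p - 1) -> s < t %% (2 * (p - 1)) -> E1_vanishes p s t.
Proof.
move=> p_gt0 s_lt_q lt_res [m /and3P [_ /eqP sdeg_m /eqP tdeg_m]].
have size_as_le : size (as_ m) <= s by rewrite -sdeg_m /sdeg leq_addl.
have : t %% (2 * (p - 1)) <= s.
  by rewrite -tdeg_m tdeg_mod // modn_small // (leq_ltn_trans size_as_le).
by rewrite leqNgt lt_res.
Qed.

Theorem lemma2p2 (p : nat) (hp : prime p) (hodd : odd p)
  (n : nat) (c : nat -> nat) (cm1 t s1 : nat)
  (hc : forall i, i <= n -> c i < p)
  (hcm1 : cm1 < 2 * (p - 1))
  (ht : t = 2 * (p - 1) * (\sum_(i < n.+1) c i * p ^ i) + cm1)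
  (hs1 : 0 < s1 < 2 * (p - 1))
  (hgt : s1 < cm1) :
  E1_vanishes p s1 t.
Proof.
have t_mod_q : t %% (2 * (p - 1)) = cm1 by rewrite ht mulnC modnMDl modn_small.
apply: E1_vanishes_of_lt_residue; first exact: prime_gt0.
- by case/andP: hs1.
- by rewrite t_mod_q.
Qed.
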